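(* Let $\{\mathcal A_i\}_{i\ge1}$ be C*-algebras, $\alpha_1:\mathcal A_1\to\mathcal A_1$ a $*$-homomorphism, and $\beta_i:\mathcal A_i\to\mathcal A_{i+1}$ ($i\ge1$) $*$-isomorphisms. Define $\alpha_i:=\beta_{i-1}\circ\alpha_{i-1}\circ\beta_{i-1}^{-1}:\mathcal A_i\to\mathcal A_i$ for $i\ge2$, and $\varphi_i:=\beta_i\circ\alpha_i:\mathcal A_i\to\mathcal A_{i+1}$ for $i\ge1$. Then $\varphi_i=\alpha_{i+1}\circ\beta_i$ for all $i\ge1$, and the diagram consisting of the horizontal maps $\varphi_i$ (in two rows), the vertical maps $\alpha_i$ and the diagonal maps $\beta_i$ (from the $i$-th entry of the lower row to the $(i+1)$-th entry of the upper row) commutes; in particular $\varphi_i\circ\alpha_i=\alpha_{i+1}\circ\varphi_i$. Moreover, letting $\mathcal A_\infty$ be the inductive limit of $\mathcal A_1\xrightarrow{\varphi_1}\mathcal A_2\xrightarrow{\varphi_2}\cdots$ with canonical maps $\varphi_{\infty i}:\mathcal A_i\to\mathcal A_\infty$, the maps $\{\alpha_i\}$ and $\{\beta_i\}$ induce $*$-homomorphisms $\alpha_\infty,\beta_\infty:\mathcal A_\infty\to\mathcal A_\infty$, determined by $\alpha_\infty(\varphi_{\infty i}(a))=\varphi_{\infty i}(\alpha_i(a))$ and $\beta_\infty(\varphi_{\infty i}(a))=\varphi_{\infty,i+1}(\beta_i(a))$, which are inverses of each other. *)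

From HB Require Import structures.
From mathcomp Require Import all_boot all_order all_algebra.
From mathcomp Require Import complex.
From mathcomp Require Import reals.
Set Implicit Arguments. Unset Strict Implicit. Unset Printing Implicit Defensive.
Import Order.TTheory GRing.Theory Num.Theory.
Local Open Scope ring_scope.

Record CstarAlg (R : realType) := {
  ca_sort :> lmodType (complex R);
  ca_mul : ca_sort -> ca_sort -> ca_sort;
  ca_star : ca_sort -> ca_sort;
  ca_norm : ca_sort -> R;
  ca_mulA : forall x y z, ca_mul x (ca_mul y z) = ca_mul (ca_mul x y) z;
  ca_mulDl : forall x y z, ca_mul (x + y) z = ca_mul x z + ca_mul y z;
  ca_mulDr : forall x y z, ca_mul x (y + z) = ca_mul x y + ca_mul x z;
  ca_mulZl : forall (a : complex R) x y, ca_mul (a *: x) y = a *: ca_mul x y;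
  ca_mulZr : forall (a : complex R) x y, ca_mul x (a *: y) = a *: ca_mul x y;
  ca_starK : forall x, ca_star (ca_star x) = x;
  ca_starD : forall x y, ca_star (x + y) = ca_star x + ca_star y;
  ca_starZ : forall (a : complex R) x, ca_star (a *: x) = (a^*)%C *: ca_star x;
  ca_starM : forall x y, ca_star (ca_mul x y) = ca_mul (ca_star y) (ca_star x);
  ca_norm_ge0 : forall x, 0 <= ca_norm x;
  ca_norm_eq0 : forall x, ca_norm x = 0 -> x = 0;
  ca_normD : forall x y, ca_norm (x + y) <= ca_norm x + ca_norm y;
  ca_normZ : forall (a : complex R) x, ((ca_norm (a *: x))%:C)%C = `|a| * ((ca_norm x)%:C)%C;
  ca_normM : forall x y, ca_norm (ca_mul x y) <= ca_norm x * ca_norm y;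
  ca_cstar : forall x, ca_norm (ca_mul (ca_star x) x) = ca_norm x ^+ 2;
  ca_complete : forall u : nat -> ca_sort,
    (forall e : R, 0 < e -> exists N, forall m n, (N <= m)%N -> (N <= n)%N ->
        ca_norm (u m - u n) < e) ->
    exists l, forall e : R, 0 < e -> exists N, forall n, (N <= n)%N ->
        ca_norm (u n - l) < e
}.

Definition star_hom (R : realType) (A B : CstarAlg R) (f : A -> B) : Prop :=
  [/\ forall x y, f (x + y) = f x + f y,
      forall (a : complex R) x, f (a *: x) = a *: f x,
      forall x y, f (ca_mul x y) = ca_mul (f x) (f y)
    & forall x, f (ca_star x) = ca_star (f x)].

Definition star_iso (R : realType) (A B : CstarAlg R) (f : A -> B) (g : B -> A) : Prop :=
  [/\ star_hom f, cancel f g & cancel g f].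

Definition is_inductive_limit (R : realType) (A : nat -> CstarAlg R)
    (phi : forall i, A i -> A i.+1) (Ainf : CstarAlg R)
    (phiinf : forall i, A i -> Ainf) : Prop :=
  [/\ forall i, star_hom (phiinf i),
      forall i x, phiinf i.+1 (phi i x) = phiinf i x
    & forall (B : CstarAlg R) (psi : forall i, A i -> B),
        (forall i, star_hom (psi i)) ->
        (forall i x, psi i.+1 (phi i x) = psi i x) ->
        exists lam : Ainf -> B,
          [/\ star_hom lam, forall i x, lam (phiinf i x) = psi i x
            & forall lam' : Ainf -> B, star_hom lam' ->
                (forall i x, lam' (phiinf i x) = psi i x) ->
                forall y, lam' y = lam y]].

(* alpha_1 = a1, alpha_{i+1} = beta_i o alpha_i o beta_i^{-1} (0-based indices). *)
Fixpoint alpha_seq (R : realType) (A : nat -> CstarAlg R)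
    (a1 : A 0 -> A 0) (beta : forall i, A i -> A i.+1)
    (betainv : forall i, A i.+1 -> A i) (i : nat) : A i -> A i :=
  match i return A i -> A i with
  | 0 => a1
  | j.+1 => fun x => beta j (@alpha_seq R A a1 beta betainv j (betainv j x))
  end.
Arguments alpha_seq {R A} a1 beta betainv i _.

Definition phi_seq (R : realType) (A : nat -> CstarAlg R)
    (a1 : A 0 -> A 0) (beta : forall i, A i -> A i.+1)
    (betainv : forall i, A i.+1 -> A i) (i : nat) : A i -> A i.+1 :=
  fun x => beta i (alpha_seq a1 beta betainv i x).
Arguments phi_seq {R A} a1 beta betainv i _.

From HB Require Import structures.
From mathcomp Require Import all_boot all_order all_algebra.
From mathcomp Require Import complex reals.

(** Conjugating by the isomorphisms makes [beta_i] intertwine [alpha_i] and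
    [alpha_(i+1)], hence also [phi_i] and [phi_(i+1)].  So [{alpha_i}] and
    [{beta_i}] are morphisms of the inductive system and induce [alpha_inf]
    and [beta_inf] on the limit; both composites are then *-endomorphisms of
    the limit that fix every [phi_inf i (x)], so they are the identity by the
    uniqueness part of the universal property. *)

Section StarHom.
Context {R : realType}.

Lemma star_hom_id {A : CstarAlg R} : star_hom (fun x : A => x).
Proof. by split. Qed.

Lemma star_hom_comp {A B C : CstarAlg R} {f : A -> B} {g : B -> C} :
  star_hom f -> star_hom g -> star_hom (fun x => g (f x)).
Proof.
by move=> [fD fZ fM fJ] [gD gZ gM gJ]; split=> *; rewrite ?fD ?gD ?fZ ?gZ ?fM ?gM ?fJ ?gJ.
Qed.

Lemma star_iso_hom {A B : CstarAlg R} {f : A -> B} {g : B -> A} :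
  star_iso f g -> star_hom f.
Proof. by case. Qed.

Lemma star_iso_hom_inv {A B : CstarAlg R} {f : A -> B} {g : B -> A} :
  star_iso f g -> star_hom g.
Proof.
move=> [[fD fZ fM fJ] fK gK]; split.
- by move=> x y; rewrite -{1}(gK x) -{1}(gK y) -fD fK.
- by move=> a x; rewrite -{1}(gK x) -fZ fK.
- by move=> x y; rewrite -{1}(gK x) -{1}(gK y) -fM fK.
- by move=> x; rewrite -{1}(gK x) -fJ fK.
Qed.

End StarHom.

Section InductiveLimit.
Context {R : realType} {A : nat -> CstarAlg R} {phi : forall i, A i -> A i.+1}.
Context {Ainf : CstarAlg R} {phiinf : forall i, A i -> Ainf}.
Hypothesis hlim : is_inductive_limit phi phiinf.

Lemma inductive_limit_hom i : star_hom (phiinf i).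
Proof. by case: hlim. Qed.

Lemma inductive_limit_compat i x : phiinf i.+1 (phi i x) = phiinf i x.
Proof. by case: hlim. Qed.

Lemma inductive_limit_lift {B : CstarAlg R} {psi : forall i, A i -> B} :
    (forall i, star_hom (psi i)) -> (forall i x, psi i.+1 (phi i x) = psi i x) ->
  exists lam : Ainf -> B, star_hom lam /\ forall i x, lam (phiinf i x) = psi i x.
Proof.
move=> psi_hom psi_compat; case: hlim => _ _ /(_ B psi psi_hom psi_compat).
by case=> lam [lam_hom lamE _]; exists lam.
Qed.

Lemma inductive_limit_hom_ext {B : CstarAlg R} {f g : Ainf -> B} :
    star_hom f -> star_hom g -> (forall i x, f (phiinf i x) = g (phiinf i x)) ->
  f =1 g.
Proof.
move=> f_hom g_hom fgE.
have g_compat i x : g (phiinf i.+1 (phi i x)) = g (phiinf i x).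
  by rewrite inductive_limit_compat.
case: hlim => _ _ /(_ B _ (fun i => star_hom_comp (inductive_limit_hom i) g_hom) g_compat).
case=> lam [_ _ lam_uniq] y.
by rewrite (lam_uniq f f_hom fgE) (lam_uniq g g_hom).
Qed.

Lemma inductive_limit_endo {h : forall i, A i -> A i} :
    (forall i, star_hom (h i)) -> (forall i x, phi i (h i x) = h i.+1 (phi i x)) ->
  exists hinf : Ainf -> Ainf,
    star_hom hinf /\ forall i x, hinf (phiinf i x) = phiinf i (h i x).
Proof.
move=> h_hom h_phi; apply: inductive_limit_lift => [i|i x].
  exact: star_hom_comp (h_hom i) (inductive_limit_hom i).
by rewrite -h_phi inductive_limit_compat.
Qed.

Lemma inductive_limit_shift {g : forall i, A i -> A i.+1} :
    (forall i, star_hom (g i)) -> (forall i x, phi i.+1 (g i x) = g i.+1 (phi i x)) ->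
  exists ginf : Ainf -> Ainf,
    star_hom ginf /\ forall i x, ginf (phiinf i x) = phiinf i.+1 (g i x).
Proof.
move=> g_hom g_phi; apply: inductive_limit_lift => [i|i x].
  exact: star_hom_comp (g_hom i) (inductive_limit_hom i.+1).
by rewrite -g_phi inductive_limit_compat.
Qed.

End InductiveLimit.

Section ConjugateSequence.
Context {R : realType} {A : nat -> CstarAlg R}.
Context {a1 : A 0 -> A 0} {beta : forall i, A i -> A i.+1}.
Context {betainv : forall i, A i.+1 -> A i}.
Hypothesis betaK : forall i, cancel (beta i) (betainv i).

Local Notation alpha := (alpha_seq a1 beta betainv).
Local Notation phi := (phi_seq a1 beta betainv).

Lemma alpha_seqS_beta i x : alpha i.+1 (beta i x) = beta i (alpha i x).
Proof. by rewrite /= betaK. Qed.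

Lemma phi_seq_alpha i x : phi i (alpha i x) = alpha i.+1 (phi i x).
Proof. by rewrite /phi_seq alpha_seqS_beta. Qed.

Lemma phi_seq_beta i x : phi i.+1 (beta i x) = beta i.+1 (phi i x).
Proof. by rewrite /phi_seq alpha_seqS_beta. Qed.

Lemma alpha_seq_star_hom :
  star_hom a1 -> (forall i, star_iso (beta i) (betainv i)) ->
  forall i, star_hom (alpha i).
Proof.
move=> a1_hom beta_iso; elim=> [//|i IH] /=.
apply: star_hom_comp (star_iso_hom (beta_iso i)).
exact: star_hom_comp (star_iso_hom_inv (beta_iso i)) IH.
Qed.

End ConjugateSequence.

Theorem proposition4p1 (R : realType) (A : nat -> CstarAlg R)
    (a1 : A 0 -> A 0) (beta : forall i, A i -> A i.+1)
    (betainv : forall i, A i.+1 -> A i)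
    (ha1 : star_hom a1)
    (hbeta : forall i, star_iso (beta i) (betainv i))
    (Ainf : CstarAlg R) (phiinf : forall i, A i -> Ainf)
    (hlim : is_inductive_limit (phi_seq a1 beta betainv) phiinf) :
  let alpha := alpha_seq a1 beta betainv in
  let phi := phi_seq a1 beta betainv in
  (* phi_i = alpha_{i+1} o beta_i *)
  (forall i x, phi i x = alpha i.+1 (beta i x)) /\
  (* commutativity of the diagram *)
  (forall i x, phi i x = beta i (alpha i x)) /\
  (forall i x, phi i (alpha i x) = alpha i.+1 (phi i x)) /\
  (* induced maps on the inductive limit *)
  exists alphainf betainf : Ainf -> Ainf,
    [/\ star_hom alphainf /\ star_hom betainf,
        (forall i x, alphainf (phiinf i x) = phiinf i (alpha i x)) /\
        (forall i x, betainf (phiinf i x) = phiinf i.+1 (beta i x)),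
        (forall f : Ainf -> Ainf, star_hom f ->
           (forall i x, f (phiinf i x) = phiinf i (alpha i x)) ->
           forall y, f y = alphainf y),
        (forall f : Ainf -> Ainf, star_hom f ->
           (forall i x, f (phiinf i x) = phiinf i.+1 (beta i x)) ->
           forall y, f y = betainf y)
      & cancel alphainf betainf /\ cancel betainf alphainf].
Proof.
move=> alpha phi; rewrite {}/alpha {}/phi.
have betaK i : cancel (beta i) (betainv i) by case: (hbeta i).
have alphaSE := alpha_seqS_beta (a1 := a1) betaK.
have phiE i x : beta i (alpha_seq a1 beta betainv i x) = phi_seq a1 beta betainv i x
  := erefl.
have [alphainf [alphainf_hom alphainfE]] :=
  inductive_limit_endo hlim (alpha_seq_star_hom ha1 hbeta) (phi_seq_alpha betaK).
have [betainf [betainf_hom betainfE]] :=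
  inductive_limit_shift hlim (fun i => star_iso_hom (hbeta i)) (phi_seq_beta betaK).
split; first by move=> i x; rewrite alphaSE.
do 2!split=> //; first exact: phi_seq_alpha.
exists alphainf, betainf; split=> //.
- move=> f f_hom fE; apply: (inductive_limit_hom_ext hlim f_hom alphainf_hom).
  by move=> i x; rewrite fE alphainfE.
- move=> f f_hom fE; apply: (inductive_limit_hom_ext hlim f_hom betainf_hom).
  by move=> i x; rewrite fE betainfE.
split.
- apply: (inductive_limit_hom_ext hlim (star_hom_comp alphainf_hom betainf_hom) star_hom_id).
  by move=> i x; rewrite alphainfE betainfE phiE (inductive_limit_compat hlim).
- apply: (inductive_limit_hom_ext hlim (star_hom_comp betainf_hom alphainf_hom) star_hom_id).
  by move=> i x; rewrite betainfE alphainfE alphaSE phiE (inductive_limit_compat hlim).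
Qed.
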